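(* Let $X$ be a locally compact, Hausdorff, second countable space. Then $(\Gamma(X),\tau_{hco})$ is a separable metrizable space.
   Context: $\Gamma(X)$ denotes the set of all homeomorphisms $f:\mathrm{dom}(f)\to\mathrm{im}(f)$ between open subsets of $X$ (including the empty function), an inverse semigroup under partial composition. For compact $K\subseteq X$ and open $V\subseteq X$ put $\langle K,V\rangle=\{f\in\Gamma(X): K\subseteq\mathrm{dom}(f),\ f(K)\subseteq V\}$ and $\langle K,V\rangle^{-1}=\{f\in\Gamma(X): K\subseteq\mathrm{im}(f),\ f^{-1}(K)\subseteq V\}$. $CL(X)$ is the set of closed subsets of $X$ (including $\emptyset$) with the Fell topology, generated by the subbasic sets $(X\setminus K)^+=\{A\in CL(X): A\subseteq X\setminus K\}$ ($K$ compact) and $V^-=\{A\in CL(X): A\cap V\neq\emptyset\}$ ($V$ nonempty open). Define $D,I:\Gamma(X)\to CL(X)$ by $D(f)=X\setminus\mathrm{dom}(f)$, $I(f)=X\setminus\mathrm{im}(f)$. The topology $\tau_{hco}$ on $\Gamma(X)$ is generated by all sets $\langle K,V\rangle$, $\langle K,V\rangle^{-1}$, $D^{-1}(W)$ and $I^{-1}(W)$, where $K$ is compact, $V$ open in $X$ and $W$ is Fell-open in $CL(X)$. *)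

From HB Require Import structures.
From mathcomp Require Import all_boot all_order all_algebra.
From mathcomp Require Import all_classical all_reals topology.
From mathcomp Require Import Rstruct.
Set Implicit Arguments. Unset Strict Implicit. Unset Printing Implicit Defensive.
Import Order.TTheory GRing.Theory Num.Theory.
Local Open Scope classical_set_scope.

Definition gen_open (T : Type) (S : set (set T)) : set (set T) :=
  fun U => forall O : set (set T),
    S `<=` O -> O setT ->
    (forall A B, O A -> O B -> O (A `&` B)) ->
    (forall F : set (set T), F `<=` O -> O (\bigcup_(A in F) A)) ->
    O U.

Definition separable_sp (T : Type) (opens : set (set T)) : Prop :=
  exists S : set T, countable S /\
    forall O, opens O -> O !=set0 -> O `&` S !=set0.

Definition metrizable_sp (T : Type) (opens : set (set T)) : Prop :=
  exists d : T -> T -> Rdefinitions.R,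
    [/\ (forall x, d x x = 0%R),
        (forall x y, d x y = 0%R -> x = y),
        (forall x y, d x y = d y x),
        (forall x y z, (d x z <= d x y + d y z)%R) &
        (forall U, opens U <->
           (forall x, U x -> exists2 e : Rdefinitions.R, (0 < e)%R &
               [set y | (d x y < e)%R] `<=` U))].

Section PartialHomeo.
Variable X : topologicalType.

(* G is the graph of a homeomorphism f : dom(f) -> im(f) between open
   subsets of X (the empty graph = the empty function). Since dom and im
   are open, continuity of f (resp. f^-1) as a map of subspaces amounts to:
   preimages of open sets of X are open in X. *)
Definition is_phomeo (G : set (X * X)) : Prop :=
  [/\ (forall x y y', G (x, y) -> G (x, y') -> y = y')
      /\ (forall x x' y, G (x, y) -> G (x', y) -> x = x'),
      open [set x | exists y, G (x, y)],
      open [set y | exists x, G (x, y)],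
      (forall U, open U -> open [set x | exists y, G (x, y) /\ U y]) &
      (forall U, open U -> open [set y | exists x, G (x, y) /\ U x])].

Record Gamma := MkGamma { graph : set (X * X); graph_phomeo : is_phomeo graph }.

Definition pdom (f : Gamma) : set X := [set x | exists y, graph f (x, y)].
Definition pim (f : Gamma) : set X := [set y | exists x, graph f (x, y)].
Definition pimage (f : Gamma) (K : set X) : set X :=
  [set y | exists2 x, K x & graph f (x, y)].
Definition ppreimage (f : Gamma) (K : set X) : set X :=
  [set x | exists2 y, K y & graph f (x, y)].

Lemma pdom_open (f : Gamma) : open (pdom f).
Proof. by case: f => G [] [? ?] ? ? ? ?. Qed.
Lemma pim_open (f : Gamma) : open (pim f).
Proof. by case: f => G [] [? ?] ? ? ? ?. Qed.

Definition hco (K V : set X) : set Gamma :=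
  [set f | K `<=` pdom f /\ pimage f K `<=` V].
Definition hco_inv (K V : set X) : set Gamma :=
  [set f | K `<=` pim f /\ ppreimage f K `<=` V].

Definition CL := {A : set X | closed A}.

Definition fell_subbase : set (set CL) :=
  [set W | (exists K : set X, compact K /\ W = [set A : CL | sval A `<=` ~` K])
        \/ (exists V : set X, [/\ open V, V !=set0 &
                       W = [set A : CL | sval A `&` V !=set0]])].

Definition fell_open : set (set CL) := gen_open fell_subbase.

Definition Dmap (f : Gamma) : CL := exist _ (~` pdom f) (open_closedC (pdom_open f)).
Definition Imap (f : Gamma) : CL := exist _ (~` pim f) (open_closedC (pim_open f)).

Definition hco_subbase : set (set Gamma) :=
  [set U | (exists K V, [/\ compact K, open V & U = hco K V])
        \/ (exists K V, [/\ compact K, open V & U = hco_inv K V])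
        \/ (exists W, fell_open W /\ U = Dmap @^-1` W)
        \/ (exists W, fell_open W /\ U = Imap @^-1` W)].

Definition tau_hco : set (set Gamma) := gen_open hco_subbase.

End PartialHomeo.

(* The topology tau_hco is generated by countably many continuous maps
   Gamma(X) -> [0, 1] that separate points, so the weighted supremum of their
   differences metrizes it, and rational boxes in these coordinates give a
   countable dense set.  For g, h built from Urysohn functions attached to pairs
   of a countable base, the coordinates are f |-> sup_x g(x) (1 - h(f x)), with
   h(f x) read as 0 off dom f, and the same for f^-1.  Choosing g = 1 on a compact
   K and h = 1 on a compact neighbourhood of f(K) inside V detects <K, V>; h = 1
   detects the Fell sets V^-.  Compactness of the superlevel sets of g makes these
   coordinates upper semicontinuous, and lower semicontinuity is immediate. *)

From HB Require Import structures.
From mathcomp Require Import all_boot all_order all_algebra.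
From mathcomp Require Import all_classical all_reals topology.
From mathcomp Require Import Rstruct Rstruct_topology normedtype.
From mathcomp Require Import ring lra.
Set Implicit Arguments. Unset Strict Implicit. Unset Printing Implicit Defensive.
Import Order.TTheory GRing.Theory Num.Theory.
Local Open Scope classical_set_scope.
Local Open Scope ring_scope.
Local Notation R := Rdefinitions.R.

Section GenOpen.
Variables (T : Type) (S : set (set T)).

Lemma gen_open_sub U : S U -> gen_open S U.
Proof. by move=> SU O SO _ _ _; exact: SO. Qed.

Lemma gen_openT : gen_open S setT.
Proof. by move=> O _ OT _ _. Qed.

Lemma gen_openI A B : gen_open S A -> gen_open S B -> gen_open S (A `&` B).
Proof. by move=> hA hB O SO OT OI OU; apply: (OI); [exact: hA|exact: hB]. Qed.

Lemma gen_open_bigcup (F : set (set T)) :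
  F `<=` gen_open S -> gen_open S (\bigcup_(A in F) A).
Proof. by move=> hF O SO OT OI OU; apply: (OU) => A /hF; apply. Qed.

Lemma gen_open_ind (P : set (set T)) : S `<=` P -> P setT ->
  (forall A B, P A -> P B -> P (A `&` B)) ->
  (forall F, F `<=` P -> P (\bigcup_(A in F) A)) -> gen_open S `<=` P.
Proof. by move=> SP PT PI PU U; apply. Qed.

Lemma gen_open_all_seq (J : eqType) (s : seq J) (F : J -> set T) :
  (forall j, j \in s -> gen_open S (F j)) ->
  gen_open S [set p | forall j, j \in s -> F j p].
Proof.
elim: s => [_|j s IH] hF.
  by rewrite (_ : [set p | _] = setT) ?gen_openT //; apply/seteqP; split.
rewrite (_ : [set p | _] = F j `&` [set p | forall i, i \in s -> F i p]).
  apply: gen_openI; first by apply: hF; rewrite mem_head.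
  by apply: IH => i si; apply: hF; rewrite in_cons si orbT.
apply/seteqP; split=> p.
  by move=> h; split=> [|i si]; apply: h; rewrite in_cons ?eqxx ?si ?orbT.
by move=> [Fj Fs] i; rewrite in_cons => /orP[/eqP ->|/Fs].
Qed.

Lemma gen_open_locally (U : set T) :
  (forall p, U p -> exists2 O, gen_open S O & O p /\ O `<=` U) -> gen_open S U.
Proof.
move=> hU; rewrite (_ : U = \bigcup_(O in [set O | gen_open S O /\ O `<=` U]) O).
  by apply: gen_open_bigcup => O [].
apply/seteqP; split=> [p Up|p [O [_ OU] /OU] //].
by have [O oO [Op OU]] := hU p Up; exists O.
Qed.

End GenOpen.

Lemma exists_natSinv_lt (e : R) : 0 < e -> exists N : nat, N.+1%:R^-1 < e.
Proof.
move=> e0; exists (Num.Def.archi_bound e^-1).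
rewrite -[ltRHS]invrK ltf_pV2 ?posrE ?ltr0Sn ?invr_gt0 //.
by rewrite (lt_trans (archi_boundP _)) ?ltr_nat ?invr_ge0 ?ltW.
Qed.

Section CubeEmbedding.
Variables (T : Type) (S : set (set T)) (I : countType) (phi : I -> T -> R).
Hypothesis phi01 : forall i p, 0 <= phi i p <= 1.

Definition cube_weight (i : I) : R := (pickle i).+1%:R^-1.
Definition cube_term i p q := `|phi i p - phi i q| * cube_weight i.
(* [0] keeps the set nonempty when [I] is empty. *)
Definition cube_dist p q := sup [set r | r = 0 \/ exists i, r = cube_term i p q].

Lemma cube_weight_gt0 i : 0 < cube_weight i.
Proof. by rewrite invr_gt0 ltr0Sn. Qed.

Lemma cube_weight_le1 i : cube_weight i <= 1.
Proof. by rewrite invf_le1 ?ltr0Sn // ler1n. Qed.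

Lemma cube_weight_le i (N : nat) : (N <= pickle i)%N -> cube_weight i <= N.+1%:R^-1.
Proof. by move=> hN; rewrite lef_pV2 ?posrE ?ltr0Sn // ler_nat. Qed.

Lemma cube_term_ge0 i p q : 0 <= cube_term i p q.
Proof. by rewrite mulr_ge0 // ltW // cube_weight_gt0. Qed.

Lemma cube_term_le_norm i p q : cube_term i p q <= `|phi i p - phi i q|.
Proof. by rewrite ler_piMr ?cube_weight_le1. Qed.

Lemma cube_term_le_weight i p q : cube_term i p q <= cube_weight i.
Proof.
apply: ler_piMl; first exact/ltW/cube_weight_gt0.
have /andP[? ?] := phi01 i p; have /andP[? ?] := phi01 i q.
by rewrite ler_norml; apply/andP; split; lra.
Qed.

Lemma has_sup_cube_terms p q : has_sup [set r | r = 0 \/ exists i, r = cube_term i p q].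
Proof.
split; first by exists 0; left.
exists 1 => _ [->|[i ->]] //.
exact: le_trans (cube_term_le_weight _ _ _) (cube_weight_le1 _).
Qed.

Lemma cube_term_le_dist i p q : cube_term i p q <= cube_dist p q.
Proof. by apply: sup_upper_bound (has_sup_cube_terms p q) _ _; right; exists i. Qed.

Lemma cube_dist_ge0 p q : 0 <= cube_dist p q.
Proof. by apply: sup_upper_bound (has_sup_cube_terms p q) _ _; left. Qed.

Lemma cube_dist_le p q c : 0 <= c -> (forall i, cube_term i p q <= c) -> cube_dist p q <= c.
Proof. by move=> c0 hc; apply: ge_sup => [|_ [->|[i ->]]] //; exists 0; left. Qed.

Lemma cube_distxx p : cube_dist p p = 0.
Proof.
apply/eqP; rewrite eq_le cube_dist_ge0 andbT.
by apply: cube_dist_le => // i; rewrite /cube_term subrr normr0 mul0r.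
Qed.

Lemma cube_distC p q : cube_dist p q = cube_dist q p.
Proof.
rewrite /cube_dist; congr sup; apply/seteqP; split=> _ [->|[i ->]];
  by [left|right; exists i; rewrite /cube_term distrC].
Qed.

Lemma cube_dist_triangle p q r : cube_dist p r <= cube_dist p q + cube_dist q r.
Proof.
apply: cube_dist_le => [|i]; first by rewrite addr_ge0 ?cube_dist_ge0.
apply: le_trans (lerD (cube_term_le_dist i p q) (cube_term_le_dist i q r)).
rewrite /cube_term -mulrDl ler_wpM2r ?ler_distD //.
exact/ltW/cube_weight_gt0.
Qed.

Hypothesis phi_inj : forall p q, (forall i, phi i p = phi i q) -> p = q.

Lemma cube_dist_eq0 p q : cube_dist p q = 0 -> p = q.
Proof.
move=> d0; apply: phi_inj => i; apply/eqP; rewrite -subr_eq0 -normr_eq0.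
have : cube_term i p q = 0.
  by apply/eqP; rewrite eq_le cube_term_ge0 andbT -d0 cube_term_le_dist.
by move/eqP; rewrite mulf_eq0 (gt_eqF (cube_weight_gt0 i)) orbF.
Qed.

Definition first_indices (N : nat) : seq I := pmap unpickle (iota 0 N).

Lemma mem_first_indices i N : (pickle i < N)%N -> i \in first_indices N.
Proof.
move=> iN; rewrite mem_pmap; apply/mapP; exists (pickle i); last by rewrite pickleK.
by rewrite mem_iota.
Qed.

(* The weights of the coordinates beyond the first [N] are below [N.+1%:R^-1]. *)
Lemma cube_dist_lt p q (N : nat) (e : R) : N.+1%:R^-1 < e ->
  (forall i, i \in first_indices N -> `|phi i q - phi i p| < e / 2) -> cube_dist p q < e.
Proof.
move=> Ne close; have e0 : 0 < e by apply: lt_trans Ne; rewrite invr_gt0 ltr0Sn.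
suff : cube_dist p q <= Num.max (e / 2) N.+1%:R^-1.
  by move/le_lt_trans; apply; rewrite gt_max Ne andbT; lra.
apply: cube_dist_le => [|i]; first by rewrite le_max; apply/orP; left; lra.
rewrite le_max; case: (ltnP (pickle i) N) => iN; apply/orP.
  left; rewrite (le_trans (cube_term_le_norm _ _ _)) // distrC.
  exact/ltW/close/mem_first_indices.
by right; rewrite (le_trans (cube_term_le_weight _ _ _)) ?cube_weight_le.
Qed.

Hypothesis phi_cont : forall i p (e : R), 0 < e -> exists O,
  [/\ gen_open S O, O p & forall q, O q -> `|phi i q - phi i p| < e].
Hypothesis phi_gen : forall U, S U -> forall p, U p ->
  exists (F : seq I) (del : R), 0 < del /\
    forall q, (forall i, i \in F -> `|phi i q - phi i p| < del) -> U q.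

Definition cube_open (U : set T) :=
  forall p, U p -> exists2 e : R, 0 < e & [set q | cube_dist p q < e] `<=` U.

Lemma gen_open_cube_open : gen_open S `<=` cube_open.
Proof.
apply: gen_open_ind => [U SU p Up|p _|A B hA hB p [/hA[e1 e10 h1] /hB[e2 e20 h2]]|
  F hF p [A FA Ap]].
- have [F [del [del0 hF]]] := phi_gen SU Up.
  have [e [e0 he]] : exists e : R, 0 < e /\ forall i, i \in F -> e <= del * cube_weight i.
    elim: F {hF} => [|j F [e [e0 he]]]; first by exists 1.
    exists (Num.min e (del * cube_weight j)); rewrite lt_min e0 mulr_gt0 ?cube_weight_gt0 //.
    by split=> // i; rewrite in_cons ge_min => /orP[/eqP->|/he->]; rewrite ?lexx ?orbT.
  exists e => // q /= pq; apply: hF => i /he ie.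
  have := le_lt_trans (cube_term_le_dist i p q) pq => /lt_le_trans /(_ ie).
  by rewrite /cube_term ltr_pM2r ?cube_weight_gt0 // distrC.
- by exists 1.
- exists (Num.min e1 e2); first by rewrite lt_min e10.
  by move=> q; rewrite /= lt_min => /andP[/(h1 q) ? /(h2 q)].
- by have [e e0 he] := hF A FA p Ap; exists e => // q /he; exists A.
Qed.

Lemma cube_open_gen_open : cube_open `<=` gen_open S.
Proof.
move=> U hU; apply: gen_open_locally => p /hU[e e0 he].
have [N Ne] := exists_natSinv_lt e0.
have e20 : 0 < e / 2 by lra.
have [O hO] := choice (fun i => phi_cont i p e20).
exists [set q | forall i, i \in first_indices N -> O i q].
  by apply: gen_open_all_seq => i _; have [] := hO i.
split=> [i _|q Oq]; first by have [] := hO i.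
by apply/he/(cube_dist_lt Ne) => i /Oq; have [_ _] := hO i; apply.
Qed.

Lemma cube_metrizable : metrizable_sp (gen_open S).
Proof.
exists cube_dist; split; [exact: cube_distxx|exact: cube_dist_eq0|exact: cube_distC|
  exact: cube_dist_triangle|].
by move=> U; split; [exact: gen_open_cube_open|exact: cube_open_gen_open].
Qed.

Definition in_rat_box (w : seq (I * rat * rat)) q :=
  forall t, t \in w -> ratr t.1.2 < phi t.1.1 q < ratr t.2.

Lemma rat_box_around p (F : seq I) (e : R) : 0 < e ->
  exists w, in_rat_box w p /\
    forall q, in_rat_box w q -> forall i, i \in F -> `|phi i q - phi i p| < e.
Proof.
move=> e0; have ab i : exists ab : rat * rat,
    phi i p - e < ratr ab.1 < phi i p /\ phi i p < ratr ab.2 < phi i p + e.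
  have [a] : exists a : rat, ratr a \in `](phi i p - e), (phi i p)[.
    by apply: rat_in_itvoo; lra.
  have [b] : exists b : rat, ratr b \in `](phi i p), (phi i p + e)[.
    by apply: rat_in_itvoo; lra.
  by rewrite !in_itv /= => ? ?; exists (a, b).
have [{}ab hab] := choice ab.
exists [seq (i, (ab i).1, (ab i).2) | i <- F]; split.
  by move=> _ /mapP[i _ ->] /=; have [/andP[_ ->] /andP[-> _]] := hab i.
move=> q wq i iF; have /andP[/= qa qb] := wq _ (map_f (fun i => (i, (ab i).1, (ab i).2)) iF).
have [/andP[? ?] /andP[? ?]] := hab i.
by rewrite ltr_norml; apply/andP; split; lra.
Qed.

Lemma cube_separable : separable_sp (gen_open S).
Proof.
have [[p0 _]|T0] := pselect (exists p : T, True); last first.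
  by exists set0; split=> // O _ [p _]; case: T0; exists p.
pose c w := if pselect (exists q, in_rat_box w q) is left h then projT1 (cid h) else p0.
have cP w q : in_rat_box w q -> in_rat_box w (c w).
  by rewrite /c; case: pselect => [h _|h wq]; [exact: (projT2 (cid h))|case: h; exists q].
exists (range c); split; first exact: sub_countable (card_image_le c setT) (countableP _).
move=> O /gen_open_cube_open hO [p Op]; have [e e0 he] := hO p Op.
have [N Ne] := exists_natSinv_lt e0.
have [w [wp wclose]] := rat_box_around p (first_indices N) (divr_gt0 e0 (ltr0Sn _ 1)).
exists (c w); split; last by exists w.
exact/he/(cube_dist_lt Ne)/(wclose _ (cP w p wp)).
Qed.

End CubeEmbedding.

Definition pointed_at (X : topologicalType) (x0 : X) : Type := X.
HB.instance Definition _ (X : topologicalType) (x0 : X) :=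
  Topological.copy (pointed_at x0) X.
HB.instance Definition _ (X : topologicalType) (x0 : X) :=
  isPointed.Build (pointed_at x0) x0.

(* [compact_cover] needs a pointed space; a point of [K] does the job. *)
Lemma compact_coverP (X : topologicalType) (K : set X) : compact K <-> cover_compact K.
Proof.
have [[x0 _]|K0] := pselect (exists x, K x).
  have h := congr1 (fun P => P K) (@compact_cover (pointed_at x0)).
  by split=> hK; [have : @cover_compact (pointed_at x0) K by rewrite -h|
    have : @compact (pointed_at x0) K by rewrite h].
rewrite (_ : K = set0); last by apply/seteqP; split=> // x Kx; case: K0; exists x.
by split=> _; [move=> I D f _ _; exists finmap.fset0 => // x|exact: compact0].
Qed.

Lemma second_countable_nat_basis (X : topologicalType) : @second_countable X ->
  exists e : nat -> set X, (forall n, open (e n)) /\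
    forall x N, nbhs x N -> exists n, e n x /\ e n `<=` N.
Proof.
move=> [B /countable_injP[code code_inj] [Bo Bb]].
pose e n := xget set0 [set U | B U /\ code U = n].
have eB U : B U -> e (code U) = U.
  move=> BU; rewrite /e; case: xgetP => [V _ [BV /code_inj]|/(_ U)[]//].
  by apply; rewrite inE.
exists e; split=> [n|x N /Bb[U [BU Ux] UN]]; last by exists (code U); rewrite eB.
by rewrite /e; case: xgetP => [V _ [/Bo]|_] //; exact: open0.
Qed.

Section BumpFunctions.
Variable X : topologicalType.
Hypothesis lcX : locally_compact [set: X].
Hypothesis hX : hausdorff_space X.

Lemma compact_nbhs_subset (x : X) (O : set X) : open O -> O x ->
  exists C, [/\ compact C, C `<=` O & nbhs x C].
Proof.
move=> oO Ox; have [U nU [cU clU]] := lcX (I : [set: X] x).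
have {}nU : nbhs x U.
  by apply: filterS (nU : nbhs x [set y | [set: X] y -> U y]) => y; apply.
have [N nN NO] := compact_regular hX cU nU (open_nbhs_nbhs (conj oO Ox)).
exists (closure (N `&` U)); split.
- apply: subclosed_compact cU _; first exact: closed_closure.
  by rewrite [X in _ `<=` X](closure_id U).1 //; apply: closureS => y [].
- by apply: subset_trans NO; apply: closureS => y [].
- by apply: filterS (@subset_closure _ _) _; apply: filterI.
Qed.

Variable e : nat -> set X.
Hypothesis e_open : forall n, open (e n).
Hypothesis e_basis : forall x N, nbhs x N -> exists n, e n x /\ e n `<=` N.

Definition is_bump i j (g : X -> R) := [/\ continuous g, forall x, 0 <= g x <= 1,
  forall x, e i x -> g x = 1, forall x, ~ e j x -> g x = 0 & compact (closure (e j))].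

Definition bump i j : X -> R := xget (fun=> 0) (is_bump i j).

Lemma bumpP i j : (exists g, is_bump i j g) -> is_bump i j (bump i j).
Proof. by rewrite /bump; case: xgetP => // nbump [g /nbump]. Qed.

Lemma bump_cont i j : continuous (bump i j).
Proof. by rewrite /bump; case: xgetP => [g _ []|_ x] //; exact: cvg_cst. Qed.

Lemma bump01 i j x : 0 <= bump i j x <= 1.
Proof. by rewrite /bump; case: xgetP => [g _ []|_] //; rewrite lexx ler01. Qed.

Lemma compact_bump_ge i j (r : R) : 0 < r -> compact [set x | r <= bump i j x].
Proof.
move=> r0; rewrite /bump; case: xgetP => [g _ [g_cont _ _ g0 cpt]|_]; last first.
  rewrite (_ : [set x | _] = set0); first exact: compact0.
  by apply/seteqP; split=> // x; rewrite /= leNgt r0.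
apply: (subclosed_compact _ cpt) => [|x /= rx].
  rewrite (_ : [set x | _] = g @^-1` [set y | r <= y]) //.
  by apply: preimage_closed; [move=> x _; exact: g_cont|exact: closed_ge].
apply: subset_closure; apply/not_notP => /g0 gx0.
by move: rx; rewrite gx0 leNgt r0.
Qed.

(* The bump is [min 1 (2 (1 - f))] for an Urysohn function [f] that vanishes at
   [x] and equals 1 off [e j]; [e i] is a basic neighbourhood of [x] where [f < 1/2]. *)
Lemma exists_bump (x : X) (O : set X) : open O -> O x ->
  exists i j, [/\ e i x, closure (e j) `<=` O & exists g, is_bump i j g].
Proof.
move=> oO Ox; have [C [cC CO nC]] := compact_nbhs_subset oO Ox.
have [j [ejx ejC]] := e_basis nC.
have clj : closure (e j) `<=` C.
  have clC : closed C := compact_closed hX cC.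
  by rewrite [X in _ `<=` X](closure_id C).1 //; apply: closureS.
have [f [cf rf f0 f1]] : exists f : X -> R, [/\ continuous f,
    range f `<=` `[0, 1], f @` [set x] `<=` [set 0] & f @` (~` e j) `<=` [set 1]].
  have crX := @locally_compact_completely_regular X R lcX hX.
  by apply/uniform_separatorP; apply: crX; [exact: open_closedC|move/(_ ejx)].
have f01 y : 0 <= f y <= 1 by have /rf := imageT f y; rewrite /= in_itv.
have nW : nbhs x (f @^-1` [set r | r < 2^-1]).
  apply: open_nbhs_nbhs; split; first by apply: open_comp => [y _|]; [exact: cf|exact: open_lt].
  by rewrite /= (f0 (f x)) ?invr_gt0 //; exists x.
have [i [eix eiW]] := e_basis nW.
exists i, j; split=> //; first exact: subset_trans clj CO.
exists (fun y => Num.min 1 (2 * (1 - f y))); split.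
- move=> y; apply: (@continuous_min R X (fun=> 1) (fun y => 2 * (1 - f y))).
    exact: cvg_cst.
  apply: continuousM; first exact: cvg_cst.
  exact: (@continuousB R R^o X (fun=> 1) f y (cvg_cst _) (cf y)).
- move=> y; have /andP[? ?] := f01 y.
  by rewrite ge_min lexx le_min ler01 /=; lra.
- by move=> y /eiW /=; have /andP[? ?] := f01 y => ?; apply/min_idPl; lra.
- by move=> y ejy; rewrite (f1 (f y)) ?subrr ?mulr0 ?(min_idPr ler01) //; exists y.
- exact: subclosed_compact (@closed_closure _ _) cC clj.
Qed.

Definition bumps (s : seq (nat * nat)) : X -> R :=
  foldr (fun ij g x => Num.max (bump ij.1 ij.2 x) (g x)) (fun=> 0) s.

Lemma bumps_cont s : continuous (bumps s).
Proof.
elim: s => [|ij s IH] x /=; first exact: cvg_cst.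
by apply: (@continuous_max R X (bump ij.1 ij.2) (bumps s) x); [exact: bump_cont|exact: IH].
Qed.

Lemma bumps01 s x : 0 <= bumps s x <= 1.
Proof.
elim: s => [|ij s IH] /=; first by rewrite lexx ler01.
have /andP[? ?] := bump01 ij.1 ij.2 x; case/andP: IH => ? ?.
by rewrite le_max ge_max; apply/and3P; split=> //; apply/orP; left.
Qed.

Lemma bump_le_bumps ij s x : ij \in s -> bump ij.1 ij.2 x <= bumps s x.
Proof.
elim: s => [|ij' s IH] //=; rewrite in_cons le_max => /orP[/eqP->|/IH->].
  by rewrite lexx.
by rewrite orbT.
Qed.

Lemma bumps_gt0 s x : 0 < bumps s x -> exists2 ij, ij \in s & 0 < bump ij.1 ij.2 x.
Proof.
elim: s => [|ij s IH] /=; first by rewrite ltxx.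
rewrite lt_max => /orP[|/IH[ij' ij's]]; first by exists ij; rewrite ?mem_head.
by exists ij' => //; rewrite in_cons ij's orbT.
Qed.

Lemma compact_bumps_ge s (r : R) : 0 < r -> compact [set x | r <= bumps s x].
Proof.
move=> r0; elim: s => [|ij s IH] /=.
  rewrite (_ : [set x | _] = set0); first exact: compact0.
  by apply/seteqP; split=> // x; rewrite /= leNgt r0.
rewrite (_ : [set x | _] = [set x | r <= bump ij.1 ij.2 x] `|` [set x | r <= bumps s x]).
  by apply: compactU => //; exact: compact_bump_ge.
by apply/seteqP; split=> x /=; rewrite le_max => /orP.
Qed.

Lemma bumps_cover (K O : set X) : compact K -> open O -> K `<=` O ->
  exists s L, [/\ forall x, K x -> bumps s x = 1, compact L, L `<=` O &
    forall x, 0 < bumps s x -> L x].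
Proof.
move=> cK oO KO.
have hij x : exists ij : nat * nat, K x ->
    [/\ e ij.1 x, closure (e ij.2) `<=` O & exists g, is_bump ij.1 ij.2 g].
  have [Kx|nKx] := pselect (K x); last by exists (0, 0)%N.
  by have [i [j ?]] := exists_bump oO (KO _ Kx); exists (i, j).
have {hij}[ij hij] := choice hij.
have [D DK KD] : finite_subset_cover K (fun x => e (ij x).1) K.
  apply: ((compact_coverP K).1 cK X K _ (fun x _ => e_open _)) => x Kx.
  by exists x => //; case: (hij x Kx).
have {}DK x : x \in finmap.enum_fset D -> K x by move=> /DK; rewrite inE.
exists [seq ij x | x <- finmap.enum_fset D].
exists (\big[setU/set0]_(x <- finmap.enum_fset D) closure (e (ij x).2)); split.
- move=> x /KD[x' xD ex]; have [_ _ /bumpP[_ _ g1 _ _]] := hij x' (DK x' xD).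
  apply/eqP; rewrite eq_le; have /andP[_ ->] := bumps01 [seq ij x | x <- finmap.enum_fset D] x.
  by rewrite -(g1 x ex); apply: bump_le_bumps; exact: map_f.
- rewrite big_seq; apply: bigsetU_compact => x /DK Kx.
  by have [_ _ /bumpP[]] := hij x Kx.
- by rewrite -bigcup_seq => y [x /DK Kx]; have [_ + _] := hij x Kx; apply.
- move=> y /bumps_gt0[_ /mapP[x xD ->] gy]; rewrite -bigcup_seq; exists x => //.
  have [_ _ /bumpP[_ _ _ g0 _]] := hij x (DK x xD).
  by apply: subset_closure; apply/not_notP => /g0 gy0; move: gy; rewrite gy0 ltxx.
Qed.

End BumpFunctions.

Section PartialHomeoOps.
Variable X : topologicalType.
Implicit Types (f p q : Gamma X).

Lemma graph_fun f x y y' : graph f (x, y) -> graph f (x, y') -> y = y'.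
Proof. by case: f => G [] [G_fun _] _ _ _ _ /=; apply: G_fun. Qed.

Lemma open_graph_preimage f (V : set X) : open V ->
  open [set x | exists y, graph f (x, y) /\ V y].
Proof. by case: f => G [] _ _ _ G_cont _ /=; apply: G_cont. Qed.

Lemma is_phomeo_inv (G : set (X * X)) : is_phomeo G -> is_phomeo [set p | G (p.2, p.1)].
Proof.
case=> [[G_fun G_inj] dom_open im_open G_cont Ginv_cont]; split => //.
by split=> [x y y' a b|x x' y a b]; [exact: G_inj a b|exact: G_fun a b].
Qed.

Definition pinv f : Gamma X := MkGamma (is_phomeo_inv (graph_phomeo f)).

Lemma Dmap_pinv f : Dmap (pinv f) = Imap f.
Proof. by congr exist; exact: Prop_irrelevance. Qed.

Lemma Imap_pinv f : Imap (pinv f) = Dmap f.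
Proof. by congr exist; exact: Prop_irrelevance. Qed.

Lemma tau_hco_pinv (O : set (Gamma X)) : tau_hco O -> tau_hco (pinv @^-1` O).
Proof.
move: O; apply: (@gen_open_ind _ (@hco_subbase X) (fun O => tau_hco (pinv @^-1` O))).
- move=> _ [[K [V [cK oV ->]]]|[[K [V [cK oV ->]]]|[[W [fW ->]]|[W [fW ->]]]]];
    apply: gen_open_sub.
  + by right; left; exists K, V.
  + by left; exists K, V.
  + right; right; right; exists W; split => //.
    by apply/seteqP; split=> f /=; rewrite Dmap_pinv.
  + right; right; left; exists W; split => //.
    by apply/seteqP; split=> f /=; rewrite Imap_pinv.
- exact: gen_openT.
- by move=> A B; exact: gen_openI.
- move=> F hF; rewrite (_ : pinv @^-1` _ = \bigcup_(A in [set pinv @^-1` B | B in F]) A).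
    by apply: gen_open_bigcup => _ [A FA <-]; exact: hF.
  apply/seteqP; split=> [f [A FA Af]|f [_ [A FA <-] Af]]; last by exists A.
  by exists (pinv @^-1` A) => //; exists A.
Qed.

Lemma compact_pimage f (L : set X) : compact L -> L `<=` pdom f -> compact (pimage f L).
Proof.
move=> /compact_coverP cL Ldom; apply/compact_coverP => I D F oF cov.
pose F' i := [set x | exists y, graph f (x, y) /\ F i y].
have [|D' D'D LD'] := cL I D F' (fun i Di => open_graph_preimage f (oF i Di)).
  move=> x Lx; have [y gxy] := Ldom x Lx.
  by have [i Di Fiy] := cov y (ex_intro2 _ _ x Lx gxy); exists i => //; exists y.
exists D' => // y [x Lx gxy]; have [i D'i [y' [gxy' Fy']]] := LD' x Lx.
by exists i => //; rewrite (graph_fun gxy gxy').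
Qed.

End PartialHomeoOps.

Section Escape.
Variable X : topologicalType.
Variables g h : X -> R.
Hypothesis g01 : forall x, 0 <= g x <= 1.
Hypothesis h01 : forall x, 0 <= h x <= 1.
Implicit Types f : Gamma X.

(* The supremum over [x] of [g x * (1 - h (f x))], where [h (f x)] is read
   as 0 when [f x] is undefined. *)
Definition escape f : R := sup [set r | r = 0 \/
  (exists x, ~ pdom f x /\ r = g x) \/
  (exists x y, graph f (x, y) /\ r = g x * (1 - h y))].

Lemma escape_term_bounds x y : 0 <= g x * (1 - h y) <= g x.
Proof.
have /andP[? ?] := g01 x; have /andP[? ?] := h01 y.
by rewrite mulr_ge0 ?subr_ge0 //= ler_piMr // lerBlDr lerDl.
Qed.

Lemma has_sup_escape f : has_sup [set r | r = 0 \/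
  (exists x, ~ pdom f x /\ r = g x) \/
  (exists x y, graph f (x, y) /\ r = g x * (1 - h y))].
Proof.
split; first by exists 0; left.
exists 1 => _ [->|[[x [_ ->]]|[x [y [_ ->]]]]] //; first by case/andP: (g01 x).
by case/andP: (escape_term_bounds x y) => _ /le_trans; apply; case/andP: (g01 x).
Qed.

Lemma escape_ge0 f : 0 <= escape f.
Proof. by apply: sup_upper_bound (has_sup_escape f) _ _; left. Qed.

Lemma escape_ge_undef f x : ~ pdom f x -> g x <= escape f.
Proof. by move=> fx; apply: sup_upper_bound (has_sup_escape f) _ _; right; left; exists x. Qed.

Lemma escape_ge_graph f x y : graph f (x, y) -> g x * (1 - h y) <= escape f.
Proof.
by move=> gxy; apply: sup_upper_bound (has_sup_escape f) _ _; right; right; exists x, y.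
Qed.

Lemma escape_le f c : 0 <= c -> (forall x, ~ pdom f x -> g x <= c) ->
  (forall x y, graph f (x, y) -> g x * (1 - h y) <= c) -> escape f <= c.
Proof.
move=> c0 undef_c graph_c; apply: ge_sup; first by exists 0; left.
by move=> _ [->|[[x [fx ->]]|[x [y [gxy ->]]]]]; [|exact: undef_c|exact: graph_c].
Qed.

Lemma escape_le1 f : escape f <= 1.
Proof.
apply: escape_le => // [x _|x y _]; first by case/andP: (g01 x).
by case/andP: (escape_term_bounds x y) => _ /le_trans; apply; case/andP: (g01 x).
Qed.

Lemma escape_gtP f (a : R) : 0 <= a -> a < escape f ->
  (exists x, ~ pdom f x /\ a < g x) \/
  (exists x y, graph f (x, y) /\ a < g x * (1 - h y)).
Proof.
move=> a0 af; apply: contrapT => witness.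
suff : escape f <= a by rewrite leNgt af.
apply: escape_le => // [x fx|x y gxy]; rewrite leNgt; apply/negP => ax; apply: witness.
  by left; exists x.
by right; exists x, y.
Qed.

Hypothesis g_cont : continuous g.
Hypothesis h_cont : continuous h.

Lemma escape_lsc f0 (a : R) : a < escape f0 ->
  exists O, [/\ tau_hco O, O f0 & forall f, O f -> a < escape f].
Proof.
move=> af0; have [a0|a0] := ltP a 0.
  by exists setT; split=> // f _; exact: lt_le_trans a0 (escape_ge0 f).
case: (escape_gtP a0 af0) => [[x [f0x ax]]|[x [y [gxy ax]]]].
- pose V := g @^-1` [set r | a < r].
  have oV : open V by apply: open_comp => [z _|]; [exact: g_cont|exact: open_gt].
  exists (@Dmap X @^-1` [set A : CL X | sval A `&` V !=set0]); split=> [||f [z [fz Vz]]].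
  + apply: gen_open_sub; right; right; left; eexists; split; last reflexivity.
    by apply: gen_open_sub; right; exists V; split=> //; exists x.
  + by exists x.
  + exact: lt_le_trans Vz (escape_ge_undef fz).
- pose V := [set z | a < g x * (1 - h z)].
  have oV : open V.
    apply: (@open_comp _ _ (fun z => g x * (1 - h z)) [set r | a < r]) => [z _|];
      last exact: open_gt.
    apply: (@continuousM R X (fun=> g x) (fun z => 1 - h z) z); first exact: cvg_cst.
    apply: (@continuousD R R^o X (fun=> 1) (fun z => - h z) z); first exact: cvg_cst.
    by apply: (@continuousN R R^o X h z); exact: h_cont.
  exists (hco [set x] V); split=> [||f [xf fV]].
  + by apply: gen_open_sub; left; exists [set x], V; split=> //; exact: compact_set1.
  + split=> [_ ->|z [_ -> gxz]]; first by exists y.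
    by rewrite /V /= -(graph_fun gxy gxz).
  + have [y' gxy'] := xf x erefl.
    by apply: lt_le_trans (escape_ge_graph gxy'); apply: fV; exists x.
Qed.

Hypothesis lcX : locally_compact [set: X].
Hypothesis hX : hausdorff_space X.

Lemma escape_local_bound f0 x y (r : R) : graph f0 (x, y) -> g x * (1 - h y) < r ->
  exists C V, [/\ compact C, open V, nbhs x C, hco C V f0 &
    forall x' y', C x' -> V y' -> g x' * (1 - h y') < r].
Proof.
move=> gxy cr; set c := g x * (1 - h y) in cr.
pose eps := Num.min 1 ((r - c) / 4).
have eps0 : 0 < eps by rewrite lt_min ltr01 /=; lra.
have eps1 : eps <= 1 by rewrite ge_min lexx.
have eps_rc : eps <= (r - c) / 4 by rewrite ge_min lexx orbT.
pose V := h @^-1` [set s | h y - eps < s].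
have oV : open V by apply: open_comp => [z _|]; [exact: h_cont|exact: open_gt].
pose A := g @^-1` [set s | s < g x + eps] `&` [set x' | exists y', graph f0 (x', y') /\ V y'].
have oA : open A.
  apply: openI; last exact: open_graph_preimage.
  by apply: open_comp => [z _|]; [exact: g_cont|exact: open_lt].
have Ax : A x by split; [rewrite /=; lra|exists y; split=> //; rewrite /V /=; lra].
have [C [cC CA nC]] := compact_nbhs_subset lcX hX oA Ax.
exists C, V; split=> //.
  split=> [z /CA[_ [y' [gzy' _]]]|z [x' Cx' gx'z]]; first by exists y'.
  by have [_ [y' [gx'y' Vy']]] := CA _ Cx'; rewrite (graph_fun gx'z gx'y').
move=> x' y' /CA[/= gx' _]; rewrite /V /= => hy'.
have /andP[? ?] := g01 x; have /andP[? ?] := g01 x'.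
have /andP[? ?] := h01 y; have /andP[? ?] := h01 y'.
(* [(g x + eps) * (1 - h y + eps) <= c + 3 eps < r] *)
have : g x' * (1 - h y') <= (g x + eps) * (1 - h y + eps).
  apply: le_trans (_ : (g x + eps) * (1 - h y') <= _).
    by rewrite ler_wpM2r ?subr_ge0 // ltW.
  by rewrite ler_wpM2l; lra.
have -> : (g x + eps) * (1 - h y + eps) = c + eps * (g x + (1 - h y)) + eps * eps.
  by rewrite /c; ring.
have : eps * (g x + (1 - h y)) <= eps * 2 by apply: ler_wpM2l; lra.
have : eps * eps <= eps * 1 by apply: ler_wpM2l; lra.
lra.
Qed.

Hypothesis g_compact : forall r : R, 0 < r -> compact [set x | r <= g x].

Lemma escape_usc f0 (b : R) : escape f0 < b ->
  exists O, [/\ tau_hco O, O f0 & forall f, O f -> escape f < b].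
Proof.
move=> f0b; pose r := (escape f0 + b) / 2.
have f0_ge0 := escape_ge0 f0.
have f0r : escape f0 < r by rewrite /r; lra.
have rb : r < b by rewrite /r; lra.
have r0 : 0 < r by lra.
pose K := [set x | r <= g x].
have Kdom : K `<=` pdom f0.
  move=> x Kx; apply: contrapT => /escape_ge_undef /(le_trans Kx).
  by rewrite leNgt f0r.
have CV x : exists CV : set X * set X, K x -> [/\ compact CV.1, open CV.2,
    nbhs x CV.1, hco CV.1 CV.2 f0 & forall x' y', CV.1 x' -> CV.2 y' -> g x' * (1 - h y') < r].
  have [Kx|nKx] := pselect (K x); last by exists (set0, set0).
  have [y gxy] := Kdom x Kx.
  have [C [V ?]] := escape_local_bound gxy (le_lt_trans (escape_ge_graph gxy) f0r).
  by exists (C, V).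
have {CV}[CV hCV] := choice CV.
have [D DK KD] : finite_subset_cover K (fun x => interior (CV x).1) K.
  apply: ((compact_coverP K).1 (g_compact r0) X K _ (fun x _ => @open_interior _ _)) => x Kx.
  by exists x => //; have [] := hCV x Kx.
have {}DK x : x \in finmap.enum_fset D -> K x by move=> /DK; rewrite inE.
exists [set f | forall x, x \in finmap.enum_fset D -> hco (CV x).1 (CV x).2 f]; split.
- apply: gen_open_all_seq => x /DK Kx; have [? ? _ _ _] := hCV x Kx.
  by apply: gen_open_sub; left; exists (CV x).1, (CV x).2.
- by move=> x /DK Kx; have [] := hCV x Kx.
move=> f fO; apply: le_lt_trans rb; apply: escape_le => [|x fx|x y gxy]; first exact: ltW.
  rewrite leNgt; apply/negP => /ltW /KD[x' x'D /interior_subset Cx].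
  by apply: fx; have [+ _] := fO x' x'D; apply.
have [gxr|/KD[x' x'D /interior_subset Cx]] := ltP (g x) r.
  by case/andP: (escape_term_bounds x y) => _ /le_trans; apply; exact: ltW.
have [_ _ _ _ bound] := hCV x' (DK x' x'D).
apply/ltW/bound => //; have [_ +] := fO x' x'D; apply.
by exists x.
Qed.

Lemma escape_cont f0 (eps : R) : 0 < eps ->
  exists O, [/\ tau_hco O, O f0 & forall f, O f -> `|escape f - escape f0| < eps].
Proof.
move=> eps0.
have [O1 [oO1 O1f0 O1lb]] := @escape_lsc f0 (escape f0 - eps) ltac:(lra).
have [O2 [oO2 O2f0 O2ub]] := @escape_usc f0 (escape f0 + eps) ltac:(lra).
exists (O1 `&` O2); split; [exact: gen_openI|by []|].
by move=> f [/O1lb ? /O2ub ?]; rewrite ltr_norml; apply/andP; split; lra.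
Qed.

End Escape.

Section HcoCoordinates.
Variable X : topologicalType.
Hypothesis lcX : locally_compact [set: X].
Hypothesis hX : hausdorff_space X.
Variable e : nat -> set X.
Hypothesis e_open : forall n, open (e n).
Hypothesis e_basis : forall x N, nbhs x N -> exists n, e n x /\ e n `<=` N.
Implicit Types (f p q : Gamma X).

Definition escape_index := (seq (nat * nat) * option (seq (nat * nat)))%type.

(* [None] stands for [h = 1]: the escape then only sees the points off the
   domain, which is how the Fell sets [V^-] are detected. *)
Definition target_bumps (o : option (seq (nat * nat))) : X -> R :=
  if o is Some t then bumps e t else fun=> 1.

Definition escape_of (j : escape_index) f := escape (bumps e j.1) (target_bumps j.2) f.

Lemma target_bumps01 o x : 0 <= target_bumps o x <= 1.
Proof. by case: o => [t|] /=; [exact: bumps01|rewrite ler01 lexx]. Qed.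

Lemma target_bumps_cont o : continuous (target_bumps o).
Proof. by case: o => [t|] /=; [exact: bumps_cont|move=> x; exact: cvg_cst]. Qed.

Lemma escape_of01 j f : 0 <= escape_of j f <= 1.
Proof.
have g01 := bumps01 e j.1; have h01 := target_bumps01 j.2.
by rewrite (escape_ge0 g01 h01) (escape_le1 g01 h01).
Qed.

Lemma escape_of_cont j f0 (eps : R) : 0 < eps ->
  exists O, [/\ tau_hco O, O f0 & forall f, O f -> `|escape_of j f - escape_of j f0| < eps].
Proof.
exact: (escape_cont (bumps01 e j.1) (target_bumps01 j.2) (bumps_cont (s := j.1))
  (target_bumps_cont (o := j.2)) lcX hX (compact_bumps_ge (s := j.1))).
Qed.

Lemma escape_of_hco (K V : set X) p : compact K -> open V -> hco K V p ->
  exists j, escape_of j p = 0 /\ forall q, escape_of j q < 1 -> hco K V q.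
Proof.
move=> cK oV [Kp pKV].
have KO : K `<=` [set x | exists y, graph p (x, y) /\ V y].
  by move=> x Kx; have [y gxy] := Kp x Kx; exists y; split=> //; apply: pKV; exists x.
have [s [L [s1 cL LO sL]]] := bumps_cover lcX hX e_open e_basis cK (open_graph_preimage p oV) KO.
have Lp : L `<=` pdom p by move=> x /LO[y [gxy _]]; exists y.
have pLV : pimage p L `<=` V.
  by move=> y [x /LO[y' [gxy' Vy']] gxy]; rewrite (graph_fun gxy gxy').
have [t [L' [t1 _ L'V tL']]] :=
  bumps_cover lcX hX e_open e_basis (compact_pimage cL Lp) oV pLV.
have g01 := bumps01 e s; have h01 := bumps01 e t.
exists (s, Some t); split=> [|q q1].
  apply/eqP; rewrite eq_le escape_ge0 // andbT /escape_of /=.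
  apply: escape_le => // [x px|x y gxy].
    by rewrite leNgt; apply/negP => /sL /LO[y [gxy _]]; apply: px; exists y.
  have [/sL Lx|s0] := ltP 0 (bumps e s x); first by rewrite t1 ?subrr ?mulr0 //; exists x.
  have -> : bumps e s x = 0 by apply/eqP; rewrite eq_le s0; case/andP: (g01 x).
  by rewrite mul0r.
split=> [x Kx|y [x Kx gxy]].
  apply: contrapT => /(escape_ge_undef g01 h01).
  by rewrite s1 // => /(lt_le_trans q1); rewrite ltxx.
have := escape_ge_graph g01 h01 gxy; rewrite s1 // mul1r => /le_lt_trans /(_ q1) ht.
by apply/L'V/tL'; lra.
Qed.

Lemma escape_of_Dmap_meets p (V : set X) x : open V -> V x -> ~ pdom p x ->
  exists j, escape_of j p = 1 /\
    forall q, 0 < escape_of j q -> exists z, ~ pdom q z /\ V z.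
Proof.
move=> oV Vx px.
have [i [j [eix ejV /bumpP[_ _ g1 g0 _]]]] := exists_bump lcX hX e_open e_basis oV Vx.
have g01 := bumps01 e [:: (i, j)]; have h01 := target_bumps01 None.
exists ([:: (i, j)], None); split=> [|q q0].
  apply/eqP; rewrite eq_le escape_le1 //=; apply: le_trans (escape_ge_undef g01 h01 px).
  by rewrite -(g1 x eix) (bump_le_bumps e x (mem_head (i, j) [::])).
case: (escape_gtP (lexx 0) q0) => [[z [qz /bumps_gt0[ij]]]|[z [y [_]]]].
  rewrite mem_seq1 => /eqP -> /= gz; exists z; split=> //; apply/ejV/subset_closure.
  by apply: contrapT => /g0 gz0; move: gz; rewrite gz0 ltxx.
by rewrite /= subrr mulr0 ltxx.
Qed.

Definition escape_nbhs (U : set (Gamma X)) p := exists (F : seq escape_index) (del : R),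
  0 < del /\ forall q, (forall j, j \in F -> `|escape_of j q - escape_of j p| < del) -> U q.

Lemma escape_nbhsI U1 U2 p : escape_nbhs U1 p -> escape_nbhs U2 p -> escape_nbhs (U1 `&` U2) p.
Proof.
move=> [F1 [d1 [d10 F1U1]]] [F2 [d2 [d20 F2U2]]].
exists (F1 ++ F2), (Num.min d1 d2); split=> [|q close]; first by rewrite lt_min d10.
split; [apply: F1U1|apply: F2U2] => j jF; apply: lt_le_trans (close j _) _;
  by rewrite ?mem_cat ?jF ?orbT // ge_min lexx ?orbT.
Qed.

Lemma escape_nbhs_hco (K V : set X) p : compact K -> open V -> hco K V p ->
  escape_nbhs (hco K V) p.
Proof.
move=> cK oV /(escape_of_hco cK oV)[j [jp jq]].
exists [:: j], 1; split=> // q /(_ j (mem_head _ _)); rewrite jp subr0 => q1.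
exact/jq/(le_lt_trans (ler_norm _) q1).
Qed.

Lemma escape_nbhs_fell (W : set (CL X)) : fell_open W ->
  forall p, W (Dmap p) -> escape_nbhs (@Dmap X @^-1` W) p.
Proof.
move: W; apply: (@gen_open_ind _ (@fell_subbase X)
  (fun W => forall p, W (Dmap p) -> escape_nbhs (@Dmap X @^-1` W) p)).
- move=> _ [[K [cK ->]]|[V [oV _ ->]]] p /=.
    move=> pK; have : hco K setT p by split=> // x Kx; apply: contrapT => /pK.
    move=> /(escape_nbhs_hco cK openT)[F [del [del0 FU]]].
    by exists F, del; split=> // q /FU[Kq _] x /= qx Kx; apply: qx; exact: Kq.
  move=> [x [px Vx]]; have [j [jp jq]] := escape_of_Dmap_meets oV Vx px.
  exists [:: j], 1; split=> // q /(_ j (mem_head _ _)); rewrite jp ltr_norml => /andP[q0 _].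
  by apply: jq; lra.
- by move=> p _; exists [::], 1.
- by move=> A B hA hB p [/hA ? /hB ?]; exact: escape_nbhsI.
- move=> F hF p [A FA /hF[//|G [del [del0 GA]]]].
  by exists G, del; split=> // q /GA Aq; exists A.
Qed.

Definition hco_coord (i : escape_index * bool) f := escape_of i.1 (if i.2 then pinv f else f).

Lemma hco_coord01 i f : 0 <= hco_coord i f <= 1.
Proof. exact: escape_of01. Qed.

Lemma hco_coord_cont i p (eps : R) : 0 < eps -> exists O,
  [/\ tau_hco O, O p & forall q, O q -> `|hco_coord i q - hco_coord i p| < eps].
Proof.
case: i => j [] eps0 /=; last exact: escape_of_cont.
have [O [oO Op Oclose]] := escape_of_cont j (pinv p) eps0.
by exists (@pinv X @^-1` O); split=> [|//|q /Oclose //]; exact: tau_hco_pinv.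
Qed.

Lemma escape_nbhs_hco_coord (b : bool) U p :
  escape_nbhs U (if b then pinv p else p) ->
  exists (F : seq (escape_index * bool)) (del : R), 0 < del /\ forall q,
    (forall i, i \in F -> `|hco_coord i q - hco_coord i p| < del) ->
    U (if b then pinv q else q).
Proof.
move=> [F [del [del0 FU]]]; exists [seq (j, b) | j <- F], del; split=> // q close.
by apply: FU => j jF; exact: (close (j, b) (map_f _ jF)).
Qed.

Lemma hco_coord_gen U : hco_subbase U -> forall p, U p ->
  exists (F : seq (escape_index * bool)) (del : R), 0 < del /\
    forall q, (forall i, i \in F -> `|hco_coord i q - hco_coord i p| < del) -> U q.
Proof.
move=> [[K [V [cK oV ->]]]|[[K [V [cK oV ->]]]|[[W [fW ->]]|[W [fW ->]]]]] p Up.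
- exact: (@escape_nbhs_hco_coord false _ _ (escape_nbhs_hco cK oV Up)).
- exact: (@escape_nbhs_hco_coord true _ _ (@escape_nbhs_hco K V (pinv p) cK oV Up)).
- exact: (@escape_nbhs_hco_coord false _ _ (escape_nbhs_fell fW Up)).
- have {}Up : W (Dmap (pinv p)) by rewrite Dmap_pinv.
  have [F [del [del0 FU]]] := @escape_nbhs_hco_coord true _ _ (escape_nbhs_fell fW Up).
  by exists F, del; split=> // q /FU /=; rewrite Dmap_pinv.
Qed.

Lemma hco_coord_inj p q : (forall i, hco_coord i p = hco_coord i q) -> p = q.
Proof.
suff graph_sub p' q' : (forall i, hco_coord i p' = hco_coord i q') -> graph p' `<=` graph q'.
  move=> pq; have : graph p = graph q.
    by apply/seteqP; split; apply: graph_sub => // i; rewrite pq.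
  case: p q {pq} => [Gp hp] [Gq hq] /= GpGq; subst Gq.
  by congr MkGamma; exact: Prop_irrelevance.
move=> coord_eq [x y] gxy.
have hco_eq (K V : set X) : compact K -> open V -> hco K V p' -> hco K V q'.
  move=> cK oV /(escape_of_hco cK oV)[j [jp jq]]; apply: jq.
  by have := coord_eq (j, false); rewrite /hco_coord /= jp => <-; exact: ltr01.
have [xq' _] : hco [set x] setT q'.
  apply: hco_eq; [exact: compact_set1|exact: openT|].
  by split=> // _ ->; exists y.
have [y' gxy'] := xq' x erefl.
have [-> //|yy'] := eqVneq y y'.
have [A [oA Ay Ay']] := hausdorff_accessible hX yy'.
have xA : hco [set x] A q'.
  apply: hco_eq; [exact: compact_set1|exact: oA|].
  by split=> [_ ->|z [_ -> gxz]]; [exists y|rewrite -(graph_fun gxy gxz) -in_setE].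
by move: Ay'; rewrite in_setE => /(_ (xA.2 y' (ex_intro2 _ _ x erefl gxy'))).
Qed.

End HcoCoordinates.

Theorem mainTheorem3 (X : topologicalType) :
  locally_compact [set: X] -> hausdorff_space X -> @second_countable X ->
  separable_sp (@tau_hco X) /\ metrizable_sp (@tau_hco X).
Proof.
move=> lcX hX /second_countable_nat_basis[e [e_open e_basis]].
have coord01 := @hco_coord01 X e.
have coord_gen := hco_coord_gen lcX hX e_open e_basis.
split; first exact: cube_separable coord01 coord_gen.
exact: cube_metrizable coord01 (hco_coord_inj lcX hX e_open e_basis)
  (hco_coord_cont lcX hX e) coord_gen.
Qed.
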